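(* Let $V,W$ be finite-dimensional real vector spaces, let $\rho\colon\mathrm{GL}(V)\to\mathrm{GL}(W)$ be a representation, and let $\mathcal{R}=(\mathcal{R}^0,\mathcal{R}^1,\dots)$ be a sequence in $\mathscr{P}(V;W)$ whose minimal polynomial $P_{\min}(\mathcal{R})$ has degree $k$. If $\mathrm{Kern}(\mathrm{Eval}_{\mathcal{R}})$ is an ideal of $\mathscr{P}(V)[\lambda]$, then $G(\mathcal{R}^{\le k})=G(\mathcal{R}^{\le k+1})$.
   Context: $\mathscr{P}(V)$ and $\mathscr{P}(V;W)$ denote the real-valued and $W$-valued polynomial functions on $V$. The degree $k$ of $P_{\min}(\mathcal{R})$ is the smallest integer $k\ge0$ such that $\mathcal{R}^0(X),\dots,\mathcal{R}^k(X)$ are linearly dependent for every $X\in V$. Then $P_{\min}(\mathcal{R})=\lambda^k+\sum_{i=1}^k a_i\lambda^{k-i}$, where $a_i$ are the unique rational functions with $\mathcal{R}^k=-\sum_{i=1}^k a_i\mathcal{R}^{k-i}$. $\mathrm{Eval}_{\mathcal{R}}\colon\mathscr{P}(V)[\lambda]\to\mathscr{P}(V;W)$ is the unique $\mathscr{P}(V)$-module homomorphism with $\lambda^i\mapsto\mathcal{R}^i$. $\mathrm{GL}(V)$ acts on $W$-valued functions by $(F\cdot\mathcal{R}^i)(X)=\rho(F)(\mathcal{R}^i(F^{-1}X))$. For $m\ge0$, $G(\mathcal{R}^{\le m})=\{F\in\mathrm{GL}(V): F\cdot\mathcal{R}^i=\mathcal{R}^i\text{ for }i=0,\dots,m\}$.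 *)

From HB Require Import structures.
From mathcomp Require Import all_boot all_algebra.
From mathcomp Require Import reals.
From mathcomp Require Import mpoly.

Set Implicit Arguments.
Unset Strict Implicit.
Unset Printing Implicit Defensive.

Import GRing.Theory Num.Theory.
Local Open Scope ring_scope.

(* V = 'cV[R]_n, W = 'cV[R]_m (coordinates chosen once and for all). *)

Definition peval (R : realType) (n : nat) (p : {mpoly R[n]}) (X : 'cV[R]_n) : R :=
  p.@[fun i => X i 0].

Definition is_polyfun (R : realType) (n m : nat) (f : 'cV[R]_n -> 'cV[R]_m) : Prop :=
  exists P : 'I_m -> {mpoly R[n]}, forall X j, f X j 0 = peval (P j) X.

Definition dep_upto (R : realType) (n m : nat) (Rs : nat -> 'cV[R]_n -> 'cV[R]_m)
  (j : nat) (X : 'cV[R]_n) : bool :=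
  ~~ free (mkseq (fun i => Rs i X) j.+1).

(* deg P_min(Rs) = k : k is the smallest integer such that R^0(X),...,R^k(X)
   are linearly dependent for every X. *)
Definition deg_Pmin (R : realType) (n m : nat) (Rs : nat -> 'cV[R]_n -> 'cV[R]_m)
  (k : nat) : Prop :=
  (forall X, dep_upto Rs k X) /\
  (forall j, (j < k)%N -> ~ (forall X, dep_upto Rs j X)).

Definition EvalR (R : realType) (n m : nat) (Rs : nat -> 'cV[R]_n -> 'cV[R]_m)
  (p : {poly {mpoly R[n]}}) : 'cV[R]_n -> 'cV[R]_m :=
  fun X => \sum_(i < size p) peval p`_i X *: Rs i X.

Definition in_KernEval (R : realType) (n m : nat) (Rs : nat -> 'cV[R]_n -> 'cV[R]_m)
  (p : {poly {mpoly R[n]}}) : Prop :=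
  forall X, EvalR Rs p X = 0.

(* Kern(Eval_R) is an ideal of P(V)[lambda] (it is always an additive subgroup;
   we require it to be closed under multiplication by arbitrary elements). *)
Definition KernEval_is_ideal (R : realType) (n m : nat)
  (Rs : nat -> 'cV[R]_n -> 'cV[R]_m) : Prop :=
  (forall p q, in_KernEval Rs p -> in_KernEval Rs q -> in_KernEval Rs (p + q)) /\
  in_KernEval Rs 0 /\
  (forall a p, in_KernEval Rs p -> in_KernEval Rs (a * p)).

Definition is_rep (R : realType) (n m : nat) (rho : 'M[R]_n -> 'M[R]_m) : Prop :=
  (forall F, F \in unitmx -> rho F \in unitmx) /\
  rho 1%:M = 1%:M /\
  (forall F G, F \in unitmx -> G \in unitmx -> rho (F *m G) = rho F *m rho G).

Definition actGL (R : realType) (n m : nat) (rho : 'M[R]_n -> 'M[R]_m)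
  (F : 'M[R]_n) (f : 'cV[R]_n -> 'cV[R]_m) : 'cV[R]_n -> 'cV[R]_m :=
  fun X => rho F *m f (invmx F *m X).

Definition in_stab (R : realType) (n m : nat) (rho : 'M[R]_n -> 'M[R]_m)
  (Rs : nat -> 'cV[R]_n -> 'cV[R]_m) (k : nat) (F : 'M[R]_n) : Prop :=
  F \in unitmx /\ (forall i, (i <= k)%N -> actGL rho F (Rs i) = Rs i).

(* Choose rows [S] such that the [k x k] minor of [R^0, ..., R^(k-1)] on [S] is
   nonzero somewhere (minimality of [k]). Laplace expansion of the [(k+1)]-minors
   on the rows [j] and [S] turns the dependence of [R^0(X), ..., R^k(X)] into a
   relation [sum_i c_i(X) R^i(X) = 0] with polynomial coefficients, i.e. an element
   of Kern(Eval_R); as the kernel is an ideal, multiplying it by [lambda] gives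
   [sum_i c_i R^(i+1) = 0]. If [F] fixes [R^0, ..., R^k], comparing these relations
   at [X] and (transported by [F]) at [F^-1 X] gives [F . R^(k+1) = R^(k+1)] where
   [c_k(X) c_k(F^-1 X) <> 0]; this polynomial is not identically zero, so the
   identity holds everywhere, as one sees by restricting to lines. *)

From HB Require Import structures.
From mathcomp Require Import all_boot all_algebra.
From mathcomp Require Import reals.
From mathcomp Require Import mpoly.
From Stdlib Require Import Classical ClassicalEpsilon FunctionalExtensionality.

Set Implicit Arguments.
Unset Strict Implicit.
Unset Printing Implicit Defensive.
Import GRing.Theory Num.Theory.
Local Open Scope ring_scope.

Lemma poly_eq0_of_horner (R : numDomainType) (q : {poly R}) :
  (forall t, q.[t] = 0) -> q = 0.
Proof.
move=> q0; apply: (@roots_geq_poly_eq0 _ q [seq i%:R | i <- iota 0 (size q)]).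
- by apply/allP => _ /mapP[i _ ->]; apply/rootP.
- by rewrite map_inj_uniq ?iota_uniq // => i j /eqP; rewrite eqr_nat => /eqP.
- by rewrite size_map size_iota.
Qed.

Section PolynomialOnLines.
Variables (R : numDomainType) (n : nat).
Implicit Types (f g : 'cV[R]_n -> R) (a b X Z : 'cV[R]_n).

Definition poly_on_lines f :=
  forall a b, exists q : {poly R}, forall t, f (a + t *: b) = q.[t].

Lemma eq_poly_on_lines f g : f =1 g -> poly_on_lines f -> poly_on_lines g.
Proof. by move=> fg pf a b; have [q qE] := pf a b; exists q => t; rewrite -fg. Qed.

Lemma poly_on_lines_meval (p : {mpoly R[n]}) :
  poly_on_lines (fun X => p.@[fun i => X i 0]).
Proof.
move=> a b; exists (\sum_(mu <- msupp p)
  (p@_mu)%:P * \prod_(i < n) ((a i 0)%:P + (b i 0)%:P * 'X) ^+ mu i) => t.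
rewrite mevalE horner_sum; apply: eq_bigr => mu _.
rewrite hornerM hornerC horner_prod; congr (_ * _); apply: eq_bigr => i _.
by rewrite horner_exp hornerD hornerM hornerX !hornerC !mxE mulrC.
Qed.

Lemma poly_on_lines_comp (M : 'M[R]_n) f :
  poly_on_lines f -> poly_on_lines (fun X => f (M *m X)).
Proof.
move=> pf a b; have [q qE] := pf (M *m a) (M *m b).
by exists q => t; rewrite mulmxDr -scalemxAr qE.
Qed.

Lemma poly_on_lines_cst (c : R) : poly_on_lines (fun=> c).
Proof. by move=> a b; exists c%:P => t; rewrite hornerC. Qed.

Lemma poly_on_linesD f g :
  poly_on_lines f -> poly_on_lines g -> poly_on_lines (fun X => f X + g X).
Proof.
move=> pf pg a b; have [[p pE] [q qE]] := (pf a b, pg a b).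
by exists (p + q) => t; rewrite hornerD pE qE.
Qed.

Lemma poly_on_linesN f : poly_on_lines f -> poly_on_lines (fun X => - f X).
Proof. by move=> pf a b; have [p pE] := pf a b; exists (- p) => t; rewrite hornerN pE. Qed.

Lemma poly_on_linesM f g :
  poly_on_lines f -> poly_on_lines g -> poly_on_lines (fun X => f X * g X).
Proof.
move=> pf pg a b; have [[p pE] [q qE]] := (pf a b, pg a b).
by exists (p * q) => t; rewrite hornerM pE qE.
Qed.

Lemma poly_on_lines_sum (I : Type) (r : seq I) (P : pred I) (F : I -> 'cV[R]_n -> R) :
  (forall i, P i -> poly_on_lines (F i)) ->
  poly_on_lines (fun X => \sum_(i <- r | P i) F i X).
Proof.
move=> pF a b; elim: r => [|i r [q qE]].
  by exists 0 => t; rewrite big_nil horner0.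
case Pi: (P i); last by exists q => t; rewrite big_cons Pi qE.
have [p pE] := pF i Pi a b.
by exists (p + q) => t; rewrite big_cons Pi hornerD pE qE.
Qed.

(* Restrict to the line through X and Z: a polynomial vanishing at every
   point is zero, and [R[t]] is an integral domain. *)
Lemma poly_on_lines_mul_eq0 f g Z :
  poly_on_lines f -> poly_on_lines g -> (forall X, f X * g X = 0) ->
  f Z != 0 -> forall X, g X = 0.
Proof.
move=> pf pg fg0 fZ X; have [[p pE] [q qE]] := (pf X (Z - X), pg X (Z - X)).
have pq0 : p * q = 0 by apply: poly_eq0_of_horner => t; rewrite hornerM -pE -qE.
have p0 : p != 0.
  apply: contraNneq fZ => p0.
  by rewrite -[Z](addrNK X) addrC -[_ - X]scale1r pE p0 horner0.
move/eqP: pq0; rewrite mulf_eq0 (negbTE p0) /= => /eqP q0.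
by have := qE 0; rewrite q0 horner0 scale0r addr0.
Qed.

Lemma poly_on_lines_mul_neq0 f g Z1 Z2 :
  poly_on_lines f -> poly_on_lines g -> f Z1 != 0 -> g Z2 != 0 ->
  exists Z, f Z * g Z != 0.
Proof.
move=> pf pg fZ1 gZ2; apply: NNPP => fg0; move/eqP: gZ2; apply.
apply: (poly_on_lines_mul_eq0 pf pg _ fZ1) => X.
by apply: contra_not_eq fg0 => fgX; exists X.
Qed.

End PolynomialOnLines.

Definition coef_mx (K : nzRingType) (m N : nat) (v : nat -> 'cV[K]_m) : 'M[K]_(m, N) :=
  \matrix_(j, i) v i j 0.

Definition cofactor_coef (K : comNzRingType) (m k : nat) (v : nat -> 'cV[K]_m)
    (S : 'I_k -> 'I_m) (i : 'I_k.+1) : K :=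
  (-1) ^+ i * \det (col' i (rowsub S (coef_mx k.+1 v))).

Lemma rmorph_cofactor_coef (K L : comNzRingType) (f : {rmorphism K -> L}) m k
    (v : nat -> 'cV[K]_m) (S : 'I_k -> 'I_m) i :
  f (cofactor_coef v S i) = cofactor_coef (fun i => map_mx f (v i)) S i.
Proof.
rewrite /cofactor_coef rmorphM rmorph_sign -det_map_mx; congr (_ * \det _).
by apply/matrixP => a b; rewrite !mxE.
Qed.

Section CofactorRelation.
Variables (K : fieldType) (m : nat).
Implicit Types (v : nat -> 'cV[K]_m).

Lemma coef_mx_mulmx N v (g : 'I_N -> K) :
  coef_mx N v *m \col_i g i = \sum_(i < N) g i *: v i.
Proof.
apply/matrixP => j z; rewrite ord1 summxE !mxE.
by apply: eq_bigr => i _; rewrite !mxE mulrC.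
Qed.

Lemma free_mkseqP N v :
  reflect (forall g : 'I_N -> K, \sum_(i < N) g i *: v i = 0 -> forall i, g i = 0)
          (free (mkseq v N)).
Proof.
have szN : size (mkseq v N) == N by rewrite size_mkseq.
have -> : free (mkseq v N) = free (Tuple szN) by [].
have sumE (g : 'I_N -> K) :
    \sum_(i < N) g i *: (Tuple szN)`_i = \sum_(i < N) g i *: v i.
  by apply: eq_bigr => i _; rewrite /= nth_mkseq.
by apply: (iffP freeP) => vfree g; [rewrite -sumE | rewrite sumE]; apply: vfree.
Qed.

Lemma free_mkseqE N v : free (mkseq v N) = row_full (coef_mx N v).
Proof.
rewrite /row_full -mxrank_tr -/(row_free _).
apply/free_mkseqP/idP => [vfree | Afree g gv0].
  apply: inj_row_free => x xA0; apply/rowP => i; rewrite mxE; apply: vfree i.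
  rewrite -coef_mx_mulmx (_ : \col_i x 0 i = x^T); last first.
    by apply/matrixP => i j; rewrite !mxE ord1.
  by apply: trmx_inj; rewrite trmx_mul trmxK trmx0.
move=> i; suff /rowP /(_ i) : \row_i g i = 0 by rewrite !mxE.
apply: (row_free_inj Afree); rewrite mul0mx; apply: trmx_inj.
rewrite trmx_mul trmxK trmx0 -[RHS]gv0.
by rewrite -coef_mx_mulmx; congr (_ *m _); apply/matrixP => j z; rewrite !mxE.
Qed.

Lemma row_full_of_det_rowsub N (A : 'M[K]_(m, N)) (S : 'I_N -> 'I_m) :
  \det (rowsub S A) != 0 -> row_full A.
Proof.
rewrite -unitfE -unitmxE => /mxrank_unit rkS; apply/eqP/anti_leq.
by rewrite rank_leq_col -{1}rkS mxrankS ?rowsub_sub.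
Qed.

Lemma cofactor_coef_max k v (S : 'I_k -> 'I_m) :
  cofactor_coef v S ord_max = (-1) ^+ k * \det (rowsub S (coef_mx k v)).
Proof. by congr (_ * \det _); apply/matrixP => a i; rewrite !mxE lift_max. Qed.

Lemma free_of_cofactor_coef_max k v (S : 'I_k -> 'I_m) :
  cofactor_coef v S ord_max != 0 -> free (mkseq v k).
Proof.
rewrite cofactor_coef_max mulf_eq0 negb_or free_mkseqE => /andP[_].
exact: row_full_of_det_rowsub.
Qed.

Lemma cofactor_coef_max_of_free k v :
  free (mkseq v k) -> exists S : 'I_k -> 'I_m, cofactor_coef v S ord_max != 0.
Proof.
rewrite free_mkseqE => vfull; exists (fullrankfun vfull).
by rewrite cofactor_coef_max mulf_neq0 ?signr_eq0 // -unitfE -unitmxE fullrowsub_unit.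
Qed.

(* Each coordinate [j] of the sum is the Laplace expansion, along its first
   row, of the determinant of the rows [j] and [S] of [v_0, ..., v_k]. *)
Lemma cofactor_relation k v (S : 'I_k -> 'I_m) :
  ~~ free (mkseq v k.+1) -> \sum_(i < k.+1) cofactor_coef v S i *: v i = 0.
Proof.
rewrite free_mkseqE => vdep; apply/matrixP => j z; rewrite ord1 summxE mxE.
pose Sj (r : 'I_k.+1) := oapp S j (unlift ord0 r).
have /eqP : \det (rowsub Sj (coef_mx k.+1 v)) == 0.
  by apply: contraNT vdep; apply: row_full_of_det_rowsub.
rewrite (expand_det_row _ ord0) => detE; rewrite -[RHS]detE.
apply: eq_bigr => i _.
rewrite !mxE /Sj unlift_none /= mulrC /cofactor add0n; congr (_ * (_ * \det _)).
by apply/matrixP => a b; rewrite !mxE liftK.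
Qed.

End CofactorRelation.

(* Eliminating the leading coefficients between the relations [c] and [c']
   yields a relation among [v_0, ..., v_(k-1)], which must be trivial; its
   shift is then exactly the claimed identity. *)
Lemma shifted_relations_agree (K : comNzRingType) (V : lmodType K) k
    (v v' : nat -> V) (c c' : 'I_k.+1 -> K) :
  (forall i, (i <= k)%N -> v' i = v i) ->
  (forall g : 'I_k -> K, \sum_(i < k) g i *: v i = 0 -> forall i, g i = 0) ->
  \sum_(i < k.+1) c i *: v i = 0 -> \sum_(i < k.+1) c i *: v i.+1 = 0 ->
  \sum_(i < k.+1) c' i *: v' i = 0 -> \sum_(i < k.+1) c' i *: v' i.+1 = 0 ->
  (c ord_max * c' ord_max) *: (v' k.+1 - v k.+1) = 0.
Proof.
have eqN (x y : V) : x + y = 0 -> x = - y by move=> /eqP; rewrite addr_eq0 => /eqP.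
move=> v'E vfree; rewrite !big_ord_recr /= => /eqN r0 /eqN r1 /eqN r0' /eqN r1'.
set d := c ord_max; set d' := c' ord_max.
pose g (i : 'I_k) := d' * c (widen_ord (leqnSn k) i) - d * c' (widen_ord (leqnSn k) i).
have gE (u : nat -> V) : \sum_(i < k) g i *: u i =
    d' *: \sum_(i < k) c (widen_ord (leqnSn k) i) *: u i -
    d *: \sum_(i < k) c' (widen_ord (leqnSn k) i) *: u i.
  rewrite !scaler_sumr -sumrB; apply: eq_bigr => i _.
  by rewrite scalerBl !scalerA.
have r0v : \sum_(i < k) c' (widen_ord (leqnSn k) i) *: v i = - (d' *: v k).
  by rewrite -v'E // -r0'; apply: eq_bigr => i _; rewrite v'E // ltnW.
have r1v : \sum_(i < k) c' (widen_ord (leqnSn k) i) *: v i.+1 = - (d' *: v' k.+1).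
  by rewrite -r1'; apply: eq_bigr => i _; rewrite v'E.
have g0 : forall i, g i = 0.
  by apply: vfree; rewrite gE r0 r0v !scalerN !scalerA mulrC subrr.
have := gE (fun i => v i.+1); rewrite big1 => [|i _]; last by rewrite g0 scale0r.
rewrite r1 r1v !scalerN !scalerA opprK scalerBr (mulrC d') => ->.
by rewrite addrC.
Qed.

Lemma EvalR_widen (R : realType) n m (Rs : nat -> 'cV[R]_n -> 'cV[R]_m)
    (p : {poly {mpoly R[n]}}) N X :
  (size p <= N)%N -> EvalR Rs p X = \sum_(i < N) peval p`_i X *: Rs i X.
Proof.
move=> pN; rewrite /EvalR (big_ord_widen N (fun i => peval p`_i X *: Rs i X) pN).
rewrite big_mkcond /=; apply: eq_bigr => i _.
by case: ltnP => // /(nth_default 0) ->; rewrite /peval meval0 scale0r.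
Qed.

Section CofactorPolynomials.
Variables (R : realType) (n m : nat) (Rs : nat -> 'cV[R]_n -> 'cV[R]_m).
Variable P : nat -> 'I_m -> {mpoly R[n]}.
Hypothesis RsE : forall i X j, Rs i X j 0 = peval (P i j) X.

Let Pcol i : 'cV[{mpoly R[n]}]_m := \col_j P i j.

Lemma peval_cofactor_coef k (S : 'I_k -> 'I_m) i X :
  peval (cofactor_coef Pcol S i) X = cofactor_coef (Rs^~ X) S i.
Proof.
rewrite /peval rmorph_cofactor_coef; congr cofactor_coef.
apply: functional_extensionality => l.
by apply/matrixP => j z; rewrite ord1 !mxE RsE.
Qed.

Lemma poly_on_lines_cofactor_coef k (S : 'I_k -> 'I_m) i :
  poly_on_lines (fun X => cofactor_coef (Rs^~ X) S i).
Proof.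
apply: eq_poly_on_lines (poly_on_lines_meval (cofactor_coef Pcol S i)) => X.
exact: peval_cofactor_coef.
Qed.

Variables (k : nat) (S : 'I_k -> 'I_m).
Hypothesis Rs_dep : forall X, dep_upto Rs k X.

Definition relation_poly : {poly {mpoly R[n]}} :=
  \poly_(i < k.+1) cofactor_coef Pcol S (inord i).

Lemma relation_poly_in_KernEval : in_KernEval Rs relation_poly.
Proof.
move=> X; rewrite (EvalR_widen _ _ (size_poly _ _)).
rewrite -[RHS](cofactor_relation S (Rs_dep X)).
by apply: eq_bigr => i _; rewrite coef_poly ltn_ord inord_val peval_cofactor_coef.
Qed.

Lemma shifted_cofactor_relation :
  (forall a p, in_KernEval Rs p -> in_KernEval Rs (a * p)) ->
  forall X, \sum_(i < k.+1) cofactor_coef (Rs^~ X) S i *: Rs i.+1 X = 0.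
Proof.
move=> ker_mul X; have := ker_mul 'X _ relation_poly_in_KernEval X.
rewrite (@EvalR_widen _ _ _ _ _ k.+2); last first.
  by rewrite (leq_trans (size_polyMleq _ _)) // size_polyX; apply: size_poly.
rewrite big_ord_recl coefXM /= /peval meval0 scale0r add0r => eq0.
rewrite -[RHS]eq0; apply: eq_bigr => i _; rewrite /bump /=.
by rewrite coefXM /= coef_poly ltn_ord inord_val -/(peval _ X) peval_cofactor_coef.
Qed.

End CofactorPolynomials.

Lemma polyfun_coefs (R : realType) n m (Rs : nat -> 'cV[R]_n -> 'cV[R]_m) :
  (forall i, is_polyfun (Rs i)) ->
  exists P : nat -> 'I_m -> {mpoly R[n]}, forall i X j, Rs i X j 0 = peval (P i j) X.
Proof.
move=> Rs_poly; pose Pi i := constructive_indefinite_description _ (Rs_poly i).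
by exists (fun i => proj1_sig (Pi i)) => i; apply: (proj2_sig (Pi i)).
Qed.

Lemma poly_on_lines_polyfun (R : realType) n m (f : 'cV[R]_n -> 'cV[R]_m) j :
  is_polyfun f -> poly_on_lines (fun X => f X j 0).
Proof. by case=> P fE; apply: eq_poly_on_lines (poly_on_lines_meval (P j)) => X. Qed.

Lemma poly_on_lines_actGL (R : realType) n m (rho : 'M[R]_n -> 'M[R]_m) F
    (f : 'cV[R]_n -> 'cV[R]_m) j :
  is_polyfun f -> poly_on_lines (fun X => actGL rho F f X j 0).
Proof.
move=> fpoly; apply: (@eq_poly_on_lines _ _
  (fun X => \sum_l rho F j l * f (invmx F *m X) l 0)) => [X|]; first by rewrite mxE.
apply: poly_on_lines_sum => l _; apply: poly_on_linesM; first exact: poly_on_lines_cst.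
exact: (poly_on_lines_comp (invmx F) (poly_on_lines_polyfun l fpoly)).
Qed.

Lemma exists_free_of_deg_Pmin (R : realType) n m (Rs : nat -> 'cV[R]_n -> 'cV[R]_m) k :
  (forall j, (j < k)%N -> ~ (forall X, dep_upto Rs j X)) ->
  exists X, free (mkseq (Rs^~ X) k).
Proof.
case: k => [_|k Rs_min]; first by exists 0; apply: nil_free.
have [X /negP Xfree] := not_all_ex_not _ _ (Rs_min k (ltnSn k)).
by exists X; apply/negPn.
Qed.

Lemma cofactor_mul_actGL_succ (R : realType) n m (rho : 'M[R]_n -> 'M[R]_m)
    (Rs : nat -> 'cV[R]_n -> 'cV[R]_m) k (S : 'I_k -> 'I_m) F :
  (forall X, dep_upto Rs k X) ->
  (forall X, \sum_(i < k.+1) cofactor_coef (Rs^~ X) S i *: Rs i.+1 X = 0) ->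
  (forall i, (i <= k)%N -> actGL rho F (Rs i) = Rs i) ->
  forall X, (cofactor_coef (Rs^~ X) S ord_max *
             cofactor_coef (Rs^~ (invmx F *m X)) S ord_max) *:
            (actGL rho F (Rs k.+1) X - Rs k.+1 X) = 0.
Proof.
move=> Rs_dep shifted Fstab X; set Y := invmx F *m X.
have [-> | dX] := eqVneq (cofactor_coef (Rs^~ X) S ord_max) 0.
  by rewrite mul0r scale0r.
have transport (u : nat -> 'cV[R]_m) :
    \sum_(i < k.+1) cofactor_coef (Rs^~ Y) S i *: u i = 0 ->
    \sum_(i < k.+1) cofactor_coef (Rs^~ Y) S i *: (rho F *m u i) = 0.
  move=> /(congr1 (mulmx (rho F))); rewrite mulmx_sumr mulmx0 => e; rewrite -[RHS]e.
  by apply: eq_bigr => i _; rewrite scalemxAr.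
apply: (@shifted_relations_agree _ _ _ (Rs^~ X) (fun i => rho F *m Rs i Y)).
- by move=> i /Fstab /(congr1 (fun f => f X)).
- by have /free_mkseqP := free_of_cofactor_coef_max dX.
- exact: cofactor_relation (Rs_dep X).
- exact: shifted.
- exact: transport (cofactor_relation S (Rs_dep Y)).
- exact: (transport (fun i => Rs i.+1 Y) (shifted Y)).
Qed.

Lemma actGL_eq_of_cofactor_mul (R : realType) n m (rho : 'M[R]_n -> 'M[R]_m) F
    (f : 'cV[R]_n -> 'cV[R]_m) (d : 'cV[R]_n -> R) X0 :
  F \in unitmx -> is_polyfun f -> poly_on_lines d -> d X0 != 0 ->
  (forall X, (d X * d (invmx F *m X)) *: (actGL rho F f X - f X) = 0) ->
  actGL rho F f = f.
Proof.
move=> uF fpoly dpoly dX0 dfF0.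
have dFpoly := poly_on_lines_comp (invmx F) dpoly.
have [Z dZ] : exists Z, d Z * d (invmx F *m Z) != 0.
  by apply: (poly_on_lines_mul_neq0 dpoly dFpoly dX0 (Z2 := F *m X0)); rewrite mulKmx.
apply: functional_extensionality => X; apply/matrixP => j z; rewrite ord1.
apply/eqP; rewrite -subr_eq0; apply/eqP; move: X.
apply: (poly_on_lines_mul_eq0 (poly_on_linesM dpoly dFpoly) _ _ dZ) => [|X].
  exact: (poly_on_linesD (poly_on_lines_actGL rho F j fpoly)
    (poly_on_linesN (poly_on_lines_polyfun j fpoly))).
by have /matrixP /(_ j 0) := dfF0 X; rewrite !mxE.
Qed.

Theorem mainTheorem15 (R : realType) (n m : nat) (rho : 'M[R]_n -> 'M[R]_m)
  (Rs : nat -> 'cV[R]_n -> 'cV[R]_m) (k : nat) :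
  is_rep rho ->
  (forall i, is_polyfun (Rs i)) ->
  deg_Pmin Rs k ->
  KernEval_is_ideal Rs ->
  forall F : 'M[R]_n, in_stab rho Rs k F <-> in_stab rho Rs k.+1 F.
Proof.
move=> _ Rs_poly [Rs_dep Rs_min] [_ [_ ker_mul]] F.
split=> -[uF Fstab]; split=> // i; last by move=> ik; apply/Fstab/ltnW.
rewrite leq_eqVlt ltnS => /predU1P[-> | /Fstab //].
have [P RsE] := polyfun_coefs Rs_poly.
have [X0 /cofactor_coef_max_of_free [S dX0]] := exists_free_of_deg_Pmin Rs_min.
apply: (actGL_eq_of_cofactor_mul uF (Rs_poly k.+1)
  (poly_on_lines_cofactor_coef RsE S ord_max) dX0).
have shifted := shifted_cofactor_relation RsE S Rs_dep ker_mul.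
exact: cofactor_mul_actGL_succ Rs_dep shifted Fstab.
Qed.
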